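(* Let $\mathbb{F}_q$ be a finite field with $4 \mid q-1$, and let $f \in \mathbb{F}_q[x]$ be irreducible of even degree $d$, so that $\mathbb{F}_{q^d} = \mathbb{F}_q[x]/\langle f\rangle$. Then the formal derivative $f'$ (taken modulo $f$) is a quadratic nonresidue in $\mathbb{F}_q[x]/\langle f\rangle$.
   Context: An element $a$ of a finite field $F$ is a quadratic nonresidue if $x^2=a$ has no solution in $F$. *)

From HB Require Import structures.
From mathcomp Require Import all_boot all_order all_algebra all_field.
Set Implicit Arguments. Unset Strict Implicit. Unset Printing Implicit Defensive.
Import GRing.Theory.
Local Open Scope ring_scope.

Definition quad_nonresidue (R : pzRingType) (a : R) : Prop :=
  ~ exists x : R, x ^+ 2 = a.

(* monic normalisation of f; generates the same ideal <f> as f when f != 0.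
   MathComp's quotient ring {poly %/ h} requires h monic. *)
Definition monic_of (F : fieldType) (f : {poly F}) : {poly F} :=
  (lead_coef f)^-1 *: f.

From HB Require Import structures.
From mathcomp Require Import all_boot all_order all_algebra all_field.
From mathcomp Require Import zify ring.
Set Implicit Arguments. Unset Strict Implicit. Unset Printing Implicit Defensive.
Import GRing.Theory.
Local Open Scope ring_scope.

(* Let a be the class of x, so that K = F_q(a), and put r_k = a^(q^k), d = 2m.
   Over K, f = c (X - r_0) ... (X - r_(d-1)), hence f'(a)^(q^k) = c prod_(0<i<d) (r_k - r_(k+i))
   (indices mod d), and the norm f'(a)^(1 + q + ... + q^(d-1)) equals c^d (-1)^m delta^2 for
   delta = prod_k prod_(0<i<m) (r_k - r_(k+i)) * prod_(k<m) (r_k - r_(k+m)).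
   The Frobenius maps r_k to r_(k+1), which fixes the first factor of delta and negates the
   second, so delta^(q-1) = -1.  Writing q - 1 = 4u, Euler's criterion reads
   f'(a)^((q^d-1)/2) = norm^(2u) = c^(4um) delta^(4u) = -1, so f'(a) is not a square. *)

Lemma big_nat_shift_periodic (R : Type) (idx : R) (op : Monoid.com_law idx)
    n (g : nat -> R) j :
  (forall k, g (k + n)%N = g k) ->
  \big[op/idx]_(0 <= k < n) g (k + j)%N = \big[op/idx]_(0 <= k < n) g k.
Proof.
case: n => [|n] g_per; first by rewrite !big_geq.
elim: j => [|j IHj]; first by under eq_bigr do rewrite addn0.
rewrite -IHj big_nat_recr // big_nat_recl // [LHS]Monoid.mulmC; congr (op _ _).
  by rewrite add0n addnS -addSn addnC g_per.
by apply: eq_bigr => k _; rewrite addSnnS.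
Qed.

Section CyclicDifferences.
Variables (R : comNzRingType) (m : nat).
Hypothesis m_gt0 : (0 < m)%N.
Local Notation n := (m + m)%N.

(* Each unordered pair of distinct indices mod 2m occurs exactly once, as (k, k + i) with
   0 < i < m or as (k, k + m) with k < m: this is a Vandermonde product up to sign. *)
Definition cyclic_disc_root (r : nat -> R) :=
  (\prod_(0 <= k < n) \prod_(1 <= i < m) (r k - r (k + i)%N)) *
  \prod_(0 <= k < m) (r k - r (k + m)%N).

Lemma eq_cyclic_disc_root (r1 r2 : nat -> R) :
  r1 =1 r2 -> cyclic_disc_root r1 = cyclic_disc_root r2.
Proof.
move=> eq_r; rewrite /cyclic_disc_root; congr (_ * _).
  by apply: eq_bigr => k _; apply: eq_bigr => i _; rewrite !eq_r.
by apply: eq_bigr => k _; rewrite !eq_r.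
Qed.

Variable r : nat -> R.
Hypothesis r_per : forall k, r (k + n)%N = r k.
Local Notation C i := (\prod_(0 <= k < n) (r k - r (k + i)%N)).

Lemma prod_diff_sym i : (i <= n)%N -> C (n - i) = C i.
Proof.
move=> le_in.
rewrite -(big_nat_shift_periodic _ i) => [|k]; last by rewrite addnAC !r_per.
under eq_bigr do rewrite -addnA subnKC // r_per -opprB -mulN1r.
by rewrite big_split /= prodr_const_nat subn0 exprD -expr2 sqrr_sign mul1r.
Qed.

Lemma prod_diff_half : C m = (-1) ^+ m * (\prod_(0 <= k < m) (r k - r (k + m)%N)) ^+ 2.
Proof.
rewrite (big_cat_nat _ (n := m)) ?leq_addr //= -{3}(add0n m) big_addn addnK.
under [X in _ * X]eq_bigr do rewrite -addnA r_per -opprB -mulN1r.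
by rewrite big_split prodr_const_nat subn0 mulrCA expr2.
Qed.

Lemma prod_diff_tail :
  \prod_(m.+1 <= i < n) C i = \prod_(1 <= i < m) C i.
Proof.
rewrite -add1n big_addn addnK big_nat_rev /=.
apply: eq_big_nat => i /andP[i_gt0 lt_im].
have -> : (1 + m - i.+1 + m = n - i)%N by lia.
by rewrite prod_diff_sym //; lia.
Qed.

Lemma prod_cyclic_diffs :
  \prod_(0 <= k < n) \prod_(1 <= i < n) (r k - r (k + i)%N) =
  (-1) ^+ m * cyclic_disc_root r ^+ 2.
Proof.
rewrite exchange_big_nat (big_cat_nat _ (n := m)) ?leq_addr //.
rewrite [\prod_(m <= i < n) _]big_ltn; last by lia.
rewrite prod_diff_tail prod_diff_half.
rewrite /cyclic_disc_root [in RHS]exchange_big_nat /=; ring.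
Qed.

Lemma cyclic_disc_root_shift :
  cyclic_disc_root (fun k => r k.+1) = - cyclic_disc_root r.
Proof.
rewrite /cyclic_disc_root -mulrN; congr (_ * _).
  pose g k := \prod_(1 <= i < m) (r k - r (k + i)%N).
  transitivity (\prod_(0 <= k < n) g (k + 1)%N).
    by apply: eq_bigr => k _; apply: eq_bigr => i _; rewrite addn1 addSn.
  by apply: big_nat_shift_periodic => k; apply: eq_bigr => i _; rewrite addnAC !r_per.
case: m m_gt0 r_per => // m' _ r_per'.
rewrite big_nat_recr // [in RHS]big_nat_recl //= mulrC -mulNr opprB.
congr (_ * _).
by rewrite add0n -addSn -[(m'.+1 + _)%N]add0n r_per'.
Qed.

End CyclicDifferences.

Lemma rmorph_cyclic_disc_root (R S : comNzRingType) (g : {rmorphism R -> S}) m r :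
  g (cyclic_disc_root m r) = cyclic_disc_root m (g \o r).
Proof.
rewrite /cyclic_disc_root rmorphM !rmorph_prod; congr (_ * _).
  by apply: eq_bigr => k _; rewrite rmorph_prod; apply: eq_bigr => i _; rewrite rmorphB.
by apply: eq_bigr => k _; rewrite rmorphB.
Qed.

Lemma horner_deriv_XsubC_mul (R : comNzRingType) (c : R) (g : {poly R}) :
  (('X - c%:P) * g)^`().[c] = g.[c].
Proof. by rewrite derivM derivXsubC mul1r !hornerE subrr mul0r addr0. Qed.

Section PnatFrobenius.
Variables (R : comNzRingType) (n : nat).

Definition pnat_Frobenius_aut of [pchar R].-nat n := fun x : R => x ^+ n.

Hypothesis pchar_n : [pchar R].-nat n.

Fact pnat_Frobenius_aut_is_zmod_morphism : zmod_morphism (pnat_Frobenius_aut pchar_n).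
Proof. by move=> x y; rewrite /pnat_Frobenius_aut exprDn_pchar // exprNn_pchar. Qed.

Fact pnat_Frobenius_aut_is_monoid_morphism :
  monoid_morphism (pnat_Frobenius_aut pchar_n).
Proof. by split=> [|x y]; rewrite /pnat_Frobenius_aut ?expr1n ?exprMn. Qed.

HB.instance Definition _ := GRing.isZmodMorphism.Build R R (pnat_Frobenius_aut pchar_n)
  pnat_Frobenius_aut_is_zmod_morphism.
HB.instance Definition _ := GRing.isMonoidMorphism.Build R R (pnat_Frobenius_aut pchar_n)
  pnat_Frobenius_aut_is_monoid_morphism.

End PnatFrobenius.

Lemma expf_card_expn (F : finFieldType) (c : F) k : c ^+ (#|F| ^ k)%N = c.
Proof. by elim: k => [|k IHk]; rewrite ?expr1 // expnSr exprM IHk expf_card. Qed.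

Lemma expf_card_pred (F : finFieldType) (x : F) : x != 0 -> x ^+ #|F|.-1 = 1.
Proof.
move=> x_neq0; apply: (mulfI x_neq0); rewrite mulr1 -exprS.
by rewrite prednK ?expf_card // (ltn_trans _ (finNzRing_gt1 F)).
Qed.

Lemma pnat_card_expn (F K : finFieldType) (phi : {rmorphism F -> K}) k :
  [pchar K].-nat (#|F| ^ k)%N.
Proof.
have [p p_pr pcharFp] := finPcharP F.
rewrite (eq_pnat _ (fmorph_pchar phi)) (eq_pnat _ (pcharf_eq pcharFp)).
by rewrite (card_pprimeChar pcharFp) -expnM pnatX pnat_id.
Qed.

Lemma exp_card_horner_map (F K : finFieldType) (phi : {rmorphism F -> K}) k
    (p : {poly F}) (y : K) :
  (map_poly phi p).[y] ^+ (#|F| ^ k)%N = (map_poly phi p).[y ^+ (#|F| ^ k)%N].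
Proof.
pose frob : {rmorphism K -> K} := pnat_Frobenius_aut (pnat_card_expn phi k).
rewrite -[LHS]/(frob _) -horner_map /= -map_poly_comp.
by congr _.[_]; apply: eq_map_poly => c /=; rewrite /pnat_Frobenius_aut -rmorphXn expf_card_expn.
Qed.

Lemma oppr1_neq1_odd_card (K : finFieldType) : odd #|K| -> (-1 : K) != 1.
Proof.
move=> odd_K; apply/eqP => eq_m11.
have pchar2 : 2 \in [pchar K].
  by rewrite inE /= mulr2n -{2}eq_m11 subrr eqxx.
move: odd_K (finNzRing_gt1 K); rewrite (card_pprimeChar pchar2) oddX orbF.
by case: logn.
Qed.

Lemma quad_nonresidue_half_power (K : finFieldType) (y : K) :
  odd #|K| -> y ^+ #|K|./2 = -1 -> quad_nonresidue y.
Proof.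
move=> odd_K y_half [x x2_y].
have x_pred : x ^+ #|K|.-1 = -1 by rewrite -odd_halfK // -mul2n exprM x2_y.
have x_neq0 : x != 0.
  apply: contra_eq_neq x_pred => ->.
  by rewrite expr0n -subn1 subn_eq0 leqNgt finNzRing_gt1 eq_sym oppr_eq0 oner_eq0.
by move: (oppr1_neq1_odd_card odd_K); rewrite -x_pred expf_card_pred ?eqxx.
Qed.

Section DerivativeAtGeneratingRoot.
Variables (F K : finFieldType) (phi : {rmorphism F -> K}) (f : {poly F}) (a : K).
Local Notation q := #|F|.
Local Notation d := (size f).-1.
Hypotheses (f_a : root (map_poly phi f) a)
  (a_gen : forall y : K, exists p : {poly F}, y = (map_poly phi p).[a])
  (card_K : #|K| = (q ^ d)%N).

Definition root_conj k := a ^+ (q ^ k).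

Local Notation Frob k := (pnat_Frobenius_aut (pnat_card_expn phi k) : {rmorphism K -> K}).

Lemma root_conj_expn i k : root_conj i ^+ (q ^ k) = root_conj (i + k).
Proof. by rewrite -exprM -expnD. Qed.

Lemma root_conj0 : root_conj 0 = a.
Proof. by rewrite /root_conj expn0 expr1. Qed.

Lemma root_conj_periodic k : root_conj (k + d) = root_conj k.
Proof. by rewrite -root_conj_expn -card_K expf_card. Qed.

Lemma root_conj_root k : root (map_poly phi f) (root_conj k).
Proof.
rewrite /root -exp_card_horner_map (rootP f_a) expr0n expn_eq0.
by rewrite eqn0Ngt (ltnW (finNzRing_gt1 F)).
Qed.

Lemma size_pred_gt0 : (0 < d)%N.
Proof.
move: (finNzRing_gt1 K); rewrite card_K lt0n.
by apply: contraTneq => ->; rewrite expn0.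
Qed.

Lemma root_conj_neq_root i : (0 < i < d)%N -> root_conj i != a.
Proof.
(* Otherwise every element of K = F(a) would be a root of X^(q^i) - X. *)
case/andP=> i_gt0 lt_id; apply/eqP => conj_i.
have fixed (y : K) : y ^+ (q ^ i) = y.
  by have [p ->] := a_gen y; rewrite exp_card_horner_map -/(root_conj i) conj_i.
pose P : {poly K} := 'X^(q ^ i) - 'X.
have size_P : size P = (q ^ i).+1.
  rewrite size_polyDl ?size_polyXn // size_polyN size_polyX ltnS.
  by rewrite -[X in (X < _)%N](expn0 q) ltn_exp2l ?finNzRing_gt1.
have := max_poly_roots (p := P) (rs := enum K).
have -> : all (root P) (enum K).
  by apply/allP => y _; rewrite rootE !hornerE fixed subrr.
rewrite -size_poly_eq0 size_P enum_uniq -cardE card_K => /(_ isT isT isT).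
by rewrite ltnS leq_exp2l ?finNzRing_gt1 // leqNgt lt_id.
Qed.

Lemma root_conj_shift_neq k i : (0 < i < d)%N -> root_conj k != root_conj (k + i).
Proof.
move/root_conj_neq_root; apply: contra_neq => eq_ki.
apply: (fmorph_inj (Frob k)); rewrite /= /pnat_Frobenius_aut.
by rewrite -root_conj0 !root_conj_expn add0n addnC eq_ki.
Qed.

Lemma root_conj_inj i j : (i < d)%N -> (j < d)%N -> root_conj i = root_conj j -> i = j.
Proof.
wlog lt_ij : i j / (i < j)%N => [hwlog lt_id lt_jd eq_ij|lt_id lt_jd].
  by case: (ltngtP i j) => // [lt_ij|lt_ji]; [|apply/esym]; apply: hwlog.
rewrite -(subnKC (ltnW lt_ij)) => /eqP; rewrite (negbTE (root_conj_shift_neq _ _)) //.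
by rewrite subn_gt0 lt_ij (leq_ltn_trans (leq_subr i j)).
Qed.

Lemma map_poly_factor :
  map_poly phi f = phi (lead_coef f) *: \prod_(0 <= i < d) ('X - (root_conj i)%:P).
Proof.
have := all_roots_prod_XsubC (p := map_poly phi f) (rs := [seq root_conj i | i <- iota 0 d]).
have size_f_gt0 : (0 < size f)%N by move: size_pred_gt0; case: (size f).
rewrite size_map_poly size_map size_iota prednK // => /(_ erefl).
have -> : all (root (map_poly phi f)) [seq root_conj i | i <- iota 0 d].
  by apply/allP => _ /mapP[i _ ->]; apply: root_conj_root.
rewrite uniq_rootsE map_inj_in_uniq ?iota_uniq => [/(_ isT isT) {1}->|i j].
  by rewrite lead_coef_map big_map /index_iota subn0.
by rewrite !mem_iota !add0n; apply: root_conj_inj.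
Qed.

Local Notation E := (map_poly phi f^`()).[a].

Lemma deriv_horner_root :
  E = phi (lead_coef f) * \prod_(1 <= i < d) (a - root_conj i).
Proof.
rewrite -deriv_map map_poly_factor derivZ hornerZ -(prednK size_pred_gt0).
rewrite big_nat_recl // root_conj0 horner_deriv_XsubC_mul horner_prod.
rewrite [in RHS]big_add1 /=.
by congr (_ * _); apply: eq_bigr => i _; rewrite hornerXsubC.
Qed.

Lemma deriv_horner_expn k :
  E ^+ (q ^ k) = phi (lead_coef f) * \prod_(1 <= i < d) (root_conj k - root_conj (k + i)).
Proof.
rewrite deriv_horner_root exprMn -rmorphXn expf_card_expn -prodrXl.
congr (_ * _); apply: eq_bigr => i _.
rewrite -[LHS]/(Frob k _) rmorphB /= /pnat_Frobenius_aut.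
by rewrite -root_conj0 !root_conj_expn add0n addnC.
Qed.

Hypothesis d_even : ~~ odd d.
Local Notation m := d./2.
Local Notation delta := (cyclic_disc_root m root_conj).

Lemma size_pred_double : d = (m + m)%N.
Proof. by rewrite addnn even_halfK. Qed.

Lemma half_size_pred_gt0 : (0 < m)%N.
Proof. by move: size_pred_gt0; rewrite {1}size_pred_double; case: (d./2). Qed.

Lemma root_conj_double_periodic k : root_conj (k + (m + m)) = root_conj k.
Proof. by rewrite -size_pred_double root_conj_periodic. Qed.

Lemma deriv_norm :
  E ^+ (\sum_(k < d) q ^ k) = phi (lead_coef f) ^+ d * ((-1) ^+ m * delta ^+ 2).
Proof.
rewrite expr_sum; under eq_bigr do rewrite deriv_horner_expn.
rewrite big_split /= prodr_const card_ord.
rewrite -(prod_cyclic_diffs half_size_pred_gt0 root_conj_double_periodic).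
by rewrite -size_pred_double big_mkord.
Qed.

Lemma disc_root_neq0 : delta != 0.
Proof.
have diff_neq0 k i : (0 < i < d)%N -> root_conj k - root_conj (k + i) != 0.
  by move/(root_conj_shift_neq k); rewrite subr_eq0.
have lt_md : (m < d)%N.
  by rewrite {2}size_pred_double -{1}(addn0 m) ltn_add2l half_size_pred_gt0.
rewrite mulf_neq0 // prodf_seq_neq0; apply/allP => k _ /=.
  rewrite prodf_seq_neq0; apply/allP => i; rewrite mem_index_iota /= => /andP[i_gt0 lt_im].
  by rewrite diff_neq0 // i_gt0 (ltn_trans lt_im).
by rewrite diff_neq0 // half_size_pred_gt0.
Qed.

Lemma disc_root_expn_pred : delta ^+ q.-1 = -1.
Proof.
apply: (mulIf disc_root_neq0); rewrite mulN1r -exprSr prednK ?(ltnW (finNzRing_gt1 F)) //.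
rewrite -[q in LHS]expn1 -[LHS]/(Frob 1 delta) rmorph_cyclic_disc_root.
rewrite -(cyclic_disc_root_shift half_size_pred_gt0 root_conj_double_periodic).
by apply: eq_cyclic_disc_root => k; rewrite /= /pnat_Frobenius_aut root_conj_expn addn1.
Qed.

Lemma deriv_half_power : (4 %| q - 1)%N -> E ^+ #|K|./2 = -1.
Proof.
case/dvdnP=> u; rewrite subn1 => q_pred.
have lc_neq0 : lead_coef f != 0.
  by rewrite lead_coef_eq0 -size_poly_eq0; move: size_pred_gt0; case: (size f).
have half_K : (#|K|./2 = (\sum_(k < d) q ^ k) * (u * 2))%N.
  rewrite -(prednK (ltnW (finNzRing_gt1 K))) card_K predn_exp q_pred.
  set S := (\sum_(k < d) q ^ k)%N.
  have -> : ((u * 4 * S).+1 = true + (S * (u * 2)).*2)%N by rewrite -muln2 /=; lia.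
  exact: half_bit_double.
rewrite half_K exprM deriv_norm exprMn [X in _ * X]exprMn -!exprM.
have -> : (d * (u * 2) = q.-1 * m)%N by rewrite q_pred {1}size_pred_double; lia.
have -> : (m * (u * 2) = m * u * 2)%N by lia.
have -> : (2 * (u * 2) = q.-1)%N by rewrite q_pred; lia.
rewrite exprM -rmorphXn expf_card_pred // rmorph1 expr1n.
by rewrite exprM sqrr_sign disc_root_expn_pred !mul1r.
Qed.

End DerivativeAtGeneratingRoot.

Section MonicOf.
Variables (F : fieldType) (f : {poly F}).
Hypothesis f_neq0 : f != 0.

Lemma monic_of_monic : monic_of f \is monic.
Proof. by rewrite monicE lead_coefZ mulVf ?lead_coef_eq0. Qed.

Lemma eqp_monic_of : monic_of f %= f.
Proof. by rewrite eqp_scale // invr_eq0 lead_coef_eq0. Qed.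

Lemma size_monic_of : size (monic_of f) = size f.
Proof. exact: eqp_size eqp_monic_of. Qed.

Lemma irreducible_monic_of : irreducible_poly f -> irreducible_poly (monic_of f).
Proof.
case=> size_f f_irr; split=> [|g size_g]; first by rewrite size_monic_of.
rewrite (eqp_dvdr _ eqp_monic_of) => /(f_irr _ size_g) g_f.
by rewrite (eqp_trans g_f) // eqp_sym eqp_monic_of.
Qed.

End MonicOf.

Section QuotientFieldGenerator.
Variables (F : finFieldType) (h : {poly F}).
Hypothesis h_mirr : monic_irreducible_poly h.
Local Notation K := {poly %/ h with h_mirr}.
Local Notation phi := (qpolyC h : {rmorphism F -> K}).

Lemma horner_map_qX (p : {poly F}) : (map_poly phi p).[('qX : K)] = in_qpoly h p.
Proof. by rewrite -in_qpoly_comp_horner comp_polyXr. Qed.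

Lemma root_map_qX (p : {poly F}) : h %| p -> root (map_poly phi p) ('qX : K).
Proof.
move=> h_dvd_p; rewrite /root horner_map_qX -(divpK h_dvd_p) in_qpolyM.
suff -> : in_qpoly h h = 0 by rewrite mulr0.
by apply: val_inj; rewrite /= (mk_monicE h_mirr) Pdiv.RingMonic.rmodpp //; case: h_mirr.
Qed.

Lemma qX_generates (y : K) : exists p : {poly F}, y = (map_poly phi p).[('qX : K)].
Proof.
by exists y; rewrite horner_map_qX; apply/val_inj/esym/in_qpoly_small/size_mk_monic.
Qed.

End QuotientFieldGenerator.

Theorem lemma5p1 (F : finFieldType) (f : {poly F}) :
  (4 %| #|F| - 1)%N ->
  irreducible_poly f ->
  ~~ odd (size f).-1 ->
  quad_nonresidue (in_qpoly (monic_of f) f^`()).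
Proof.
move=> q4 f_irr d_even; have f_neq0 := irredp_neq0 f_irr.
have h_mirr : monic_irreducible_poly (monic_of f) :=
  (irreducible_monic_of f_neq0 f_irr, monic_of_monic f_neq0).
pose K := {poly %/ monic_of f with h_mirr}.
have card_K : #|K| = (#|F| ^ (size f).-1)%N by rewrite card_qfpoly size_monic_of.
have f_qX : root (map_poly (qpolyC _ : {rmorphism F -> K}) f) 'qX.
  by apply: root_map_qX; rewrite (eqp_dvdl _ (eqp_monic_of f_neq0)).
have odd_K : odd #|K|.
  have [u q_pred] := dvdnP q4.
  have q_eq : #|F| = (u * 4).+1 by rewrite -q_pred subn1 prednK // ltnW // finNzRing_gt1.
  by rewrite card_K q_eq oddX /= oddM andbF orbT.
rewrite -(horner_map_qX h_mirr); apply: quad_nonresidue_half_power odd_K _.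
exact: (deriv_half_power f_qX (@qX_generates _ _ h_mirr) card_K d_even q4).
Qed.
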